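(* Let $\mathcal{O}=(X_{\min},X_{\max})$ be bounded, $T>0$, and let $a=\tfrac12\sigma^2$, $b$, $r$ be bounded functions on $(0,T)\times\mathcal{O}$ such that $a(t,x)\ge\eta_0>0$ for all $(t,x)$ and $|a(t,x)-a(t,y)|\le L|x-y|$ for all $t\in(0,T)$, $x,y\in\mathcal{O}$ (for some $\eta_0>0$, $L\ge0$). For $J\ge1$ let $h=\frac{X_{\max}-X_{\min}}{J+1}$, $x_i=X_{\min}+ih$, and for a fixed time $t$ let $A$ be the tridiagonal $J\times J$ matrix with entries $A_{i,i-1}=-\frac{a(t,x_i)}{h^2}-\frac{b(t,x_i)}{2h}$, $A_{i,i}=\frac{2a(t,x_i)}{h^2}+r(t,x_i)$, $A_{i,i+1}=-\frac{a(t,x_i)}{h^2}+\frac{b(t,x_i)}{2h}$. Then there exist $\eta>0$ and $\gamma\ge0$, depending only on $\eta_0,L,\|b\|_\infty,\|r\|_\infty$ (in particular independent of $J$, $h$ and $t$), such that for all $e\in\mathbb{R}^J$, $$\langle e,Ae\rangle\ge\eta\,N(e/h)^2-\gamma\|e\|_2^2,$$ where $N(x):=\big(\sum_{j=1}^{J+1}|x_j-x_{j-1}|^2\big)^{1/2}$ with the convention $x_0=x_{J+1}=0$.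
   Context: $\langle\cdot,\cdot\rangle$ and $\|\cdot\|_2$ are the Euclidean inner product and norm on $\mathbb{R}^J$. *)

From HB Require Import structures.
From mathcomp Require Import all_boot all_order all_algebra.
From mathcomp Require Import reals.

Set Implicit Arguments. Unset Strict Implicit. Unset Printing Implicit Defensive.
Import Order.TTheory GRing.Theory Num.Theory.
Local Open Scope ring_scope.

Section FD.
Variable R : realType.

Definition mesh (Xmin Xmax : R) (J : nat) : R := (Xmax - Xmin) / (J.+1)%:R.

Definition grid (Xmin Xmax : R) (J : nat) (i : nat) : R :=
  Xmin + i%:R * mesh Xmin Xmax J.

(* The tridiagonal finite-difference matrix at time t.
   Row/column index i : 'I_J corresponds to paper index i+1. *)
Definition fdmat (a b r : R -> R -> R) (Xmin Xmax t : R) (J : nat) : 'M[R]_J :=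
  let h := mesh Xmin Xmax J in
  \matrix_(i < J, j < J)
    (let xi := grid Xmin Xmax J i.+1 in
     if (nat_of_ord j == nat_of_ord i)%N then 2 * a t xi / h ^+ 2 + r t xi
     else if (nat_of_ord j).+1 == nat_of_ord i then - (a t xi / h ^+ 2) - b t xi / (2 * h)
     else if nat_of_ord j == (nat_of_ord i).+1 then - (a t xi / h ^+ 2) + b t xi / (2 * h)
     else 0).

Definition inner (J : nat) (u v : 'cV[R]_J) : R := \sum_(i < J) u i 0 * v i 0.
Definition norm2sq (J : nat) (u : 'cV[R]_J) : R := \sum_(i < J) (u i 0) ^+ 2.

(* extension of e in R^J to indices 0..J+1 (paper indexing) with e_0 = e_{J+1} = 0 *)
Definition ext (J : nat) (e : 'cV[R]_J) (k : nat) : R :=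
  match k with
  | 0 => 0
  | k'.+1 => if insub k' is Some i then e (i : 'I_J) 0 else 0
  end.

Definition Ndisc (J : nat) (x : nat -> R) : R :=
  Num.sqrt (\sum_(1 <= j < J.+2) `|x j - x j.-1| ^+ 2).

End FD.

From HB Require Import structures.
From mathcomp Require Import all_boot all_order all_algebra.
From mathcomp Require Import reals ring lra zify.

(* Extend e by E_0 = E_{J+1} = 0 and put D_k = (E_k - E_{k-1})/h.  Summation by
   parts rewrites <e, A e> as a sum over the cells 1 <= k <= J+1 of
     a_{k-1} D_k^2 + ((a_k - a_{k-1})/h + b_k/2) E_k D_k + r_k E_k^2 + b_k/2 E_k D_{k+1}.
   The Lipschitz bound on a makes (a_k - a_{k-1})/h bounded independently of h, so
   Young's inequality absorbs both cross terms into (eta0/2) D_k^2 and (eta0/4) D_{k+1}^2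
   at the cost of a multiple of E_k^2; since sum_k D_{k+1}^2 <= sum_k D_k^2, what is
   left is (eta0/4) N(e/h)^2 - gamma |e|^2. *)

Set Implicit Arguments. Unset Strict Implicit. Unset Printing Implicit Defensive.
Import Order.TTheory GRing.Theory Num.Theory.
Local Open Scope ring_scope.

Lemma young_lower_bound (R : realFieldType) (c p x y : R) :
  0 < c -> - (c * x ^+ 2) - p ^+ 2 * y ^+ 2 / (4 * c) <= p * y * x.
Proof.
move=> c_gt0; rewrite -subr_ge0.
have -> : p * y * x - (- (c * x ^+ 2) - p ^+ 2 * y ^+ 2 / (4 * c))
          = (2 * c * x + p * y) ^+ 2 / (4 * c) by field; rewrite gt_eqF.
by rewrite divr_ge0 ?sqr_ge0 // ltW // mulr_gt0.
Qed.

Lemma sqr_le_of_norm_le (R : realDomainType) (x M : R) : `|x| <= M -> x ^+ 2 <= M ^+ 2.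
Proof.
move=> le_xM; rewrite -real_normK ?num_real // lerXn2r ?nnegrE //.
exact: le_trans le_xM.
Qed.

Lemma energy_density_lower_bound (R : realFieldType) (eta0 M Br al m be rho x y z : R) :
  0 < eta0 -> eta0 <= al -> `|m| <= M -> `|be| <= M -> `|rho| <= Br ->
  eta0 / 2 * x ^+ 2 - eta0 / 4 * y ^+ 2 - (M ^+ 2 / eta0 + Br) * z ^+ 2
  <= al * x ^+ 2 + m * z * x + rho * z ^+ 2 + be / 2 * z * y.
Proof.
move=> eta0_gt0 le_al /sqr_le_of_norm_le m_sq /sqr_le_of_norm_le be_sq /lerNnormlW rho_lb.
have := @young_lower_bound _ (eta0 / 2) m x z ltac:(lra).
have := @young_lower_bound _ (eta0 / 4) (be / 2) y z ltac:(lra).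
pose u := z ^+ 2 / eta0.
have u_ge0 : 0 <= u by rewrite divr_ge0 ?sqr_ge0 // ltW.
have -> : m ^+ 2 * z ^+ 2 / (4 * (eta0 / 2)) = m ^+ 2 / 2 * u.
  by rewrite /u; field; rewrite gt_eqF.
have -> : (be / 2) ^+ 2 * z ^+ 2 / (4 * (eta0 / 4)) = be ^+ 2 / 4 * u.
  by rewrite /u; field; rewrite gt_eqF.
have -> : (M ^+ 2 / eta0 + Br) * z ^+ 2 = M ^+ 2 * u + Br * z ^+ 2.
  by rewrite /u; field; rewrite gt_eqF.
have := ler_wpM2r u_ge0 m_sq; have := ler_wpM2r u_ge0 be_sq.
have := ler_wpM2r (sqr_ge0 x) le_al; have := mulr_ge0 (sqr_ge0 M) u_ge0.
have := ler_wpM2r (sqr_ge0 z) rho_lb.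
lra.
Qed.

Definition bdiff (R : fieldType) (h : R) (E : nat -> R) (k : nat) : R := (E k - E k.-1) / h.

Definition fd_apply (R : fieldType) (h : R) (alpha beta rho E : nat -> R) (k : nat) : R :=
  (2 * alpha k / h ^+ 2 + rho k) * E k
  + (- (alpha k / h ^+ 2) - beta k / (2 * h)) * E k.-1
  + (- (alpha k / h ^+ 2) + beta k / (2 * h)) * E k.+1.

Section DiscreteEnergy.
Variables (R : realFieldType) (h : R) (alpha beta rho E : nat -> R) (n : nat).
Hypotheses (E0 : E 0%N = 0) (E_out : forall k, (n < k)%N -> E k = 0).
Local Notation D := (bdiff h E).

Lemma fd_energy_identity : h != 0 ->
  \sum_(1 <= k < n.+1) E k * fd_apply h alpha beta rho E k =
  \sum_(1 <= k < n.+2) (alpha k.-1 * D k ^+ 2 + ((alpha k - alpha k.-1) / h + beta k / 2) * E k * D k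
                        + rho k * E k ^+ 2 + beta k / 2 * E k * D k.+1).
Proof.
move=> h_neq0.
pose flux k := alpha k.-1 * E k.-1 * D k / h.
rewrite [RHS](eq_bigr (fun k => E k * fd_apply h alpha beta rho E k + (flux k.+1 - flux k))); last first.
  by move=> k _; rewrite /flux /bdiff /fd_apply /=; field.
rewrite big_split /= telescope_sumr // /flux /= E0 E_out // !mulr0 !mul0r subrr addr0.
by rewrite [in RHS]big_nat_recr //= E_out // mul0r addr0.
Qed.

Lemma fd_energy_lower_bound (eta0 L Bb Br : R) :
  0 < h -> 0 < eta0 ->
  (forall k, eta0 <= alpha k) -> (forall k, `|alpha k.+1 - alpha k| <= L * h) ->
  (forall k, `|beta k| <= Bb) -> (forall k, `|rho k| <= Br) ->
  eta0 / 4 * \sum_(1 <= k < n.+2) D k ^+ 2 - ((L + Bb) ^+ 2 / eta0 + Br) * \sum_(1 <= k < n.+1) E k ^+ 2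
  <= \sum_(1 <= k < n.+1) E k * fd_apply h alpha beta rho E k.
Proof.
move=> h_gt0 eta0_gt0 alpha_ge alpha_lip beta_le rho_le.
rewrite fd_energy_identity ?gt_eqF //.
set gamma := (L + Bb) ^+ 2 / eta0 + Br.
have L_ge0 : 0 <= L by rewrite -(pmulr_lge0 _ h_gt0) (le_trans _ (alpha_lip 0%N)).
have density_ge k : (1 <= k < n.+2)%N ->
    eta0 / 2 * D k ^+ 2 - eta0 / 4 * D k.+1 ^+ 2 - gamma * E k ^+ 2 <=
    alpha k.-1 * D k ^+ 2 + ((alpha k - alpha k.-1) / h + beta k / 2) * E k * D k
    + rho k * E k ^+ 2 + beta k / 2 * E k * D k.+1.
  case/andP=> k_gt0 _; have /ler_normlP[b1 b2] := beta_le k.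
  apply: energy_density_lower_bound => //; last by rewrite (le_trans (beta_le k)) ?lerDr.
  have /ler_normlP[s1 s2] : `|(alpha k - alpha k.-1) / h| <= L.
    by rewrite normrM normfV (gtr0_norm h_gt0) ler_pdivrMr // -{1}(prednK k_gt0).
  by rewrite ler_norml; apply/andP; split; lra.
have shift_le : \sum_(1 <= k < n.+2) D k.+1 ^+ 2 <= \sum_(1 <= k < n.+2) D k ^+ 2.
  rewrite big_nat_recr // [X in _ <= X]big_nat_recl //= {2}/bdiff !E_out //.
  by rewrite subrr mul0r expr0n addr0 lerDr sqr_ge0.
have E_sum : \sum_(1 <= k < n.+2) E k ^+ 2 = \sum_(1 <= k < n.+1) E k ^+ 2.
  by rewrite big_nat_recr //= E_out // expr0n addr0.
apply: le_trans (ler_sum_nat density_ge).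
rewrite !sumrB -!mulr_sumr E_sum.
have eta0_4_ge0 : 0 <= eta0 / 4 by lra.
have := ler_wpM2l eta0_4_ge0 shift_le; lra.
Qed.
End DiscreteEnergy.

Lemma sum_tridiag (R : pzRingType) (n i : nat) (c0 cm cp : R) (E : nat -> R) :
  (i < n)%N -> E 0%N = 0 -> E n.+1 = 0 ->
  \sum_(0 <= j < n)
     (if j == i then c0 else if j.+1 == i then cm else if j == i.+1 then cp else 0) * E j.+1
  = c0 * E i.+1 + cm * E i + cp * E i.+2.
Proof.
move=> lt_in E0 En.
have split3 j : (if j == i then c0 else if j.+1 == i then cm
                 else if j == i.+1 then cp else 0) * E j.+1 =
    (if j == i then c0 * E j.+1 else 0) + (if j.+1 == i then cm * E j.+1 else 0)
    + (if j == i.+1 then cp * E j.+1 else 0).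
  by do 3 case: eqP => ? //; rewrite ?mul0r ?addr0 ?add0r //; exfalso; lia.
rewrite (eq_bigr _ (fun j _ => split3 j)) {split3} !big_split /= -!big_mkcond /= !big_nat1_eq lt_in.
congr (_ + _ + _).
- case: i lt_in => [|i] lt_in; first by rewrite big_pred0 // E0 mulr0.
  by under eq_bigl do rewrite eqSS; rewrite big_nat1_eq ifT //; lia.
- rewrite leq0n /=; case: ltnP => // le_n.
  by rewrite (_ : i.+2 = n.+1) ?En ?mulr0 //; lia.
Qed.

(* Coefficients at the indices 0 and J+1 are copied from the nearest interior node:
   they only ever multiply E_0 = E_{J+1} = 0, and this way the bounds on a, b, r hold
   at every index. *)
Definition clamp (J k : nat) : nat := minn (maxn k 1) J.

Section FiniteDifferenceMatrix.
Variables (R : realType) (Xmin Xmax : R) (J : nat).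
Local Notation h := (mesh Xmin Xmax J).
Local Notation x_ := (grid Xmin Xmax J).

Definition nodal (f : R -> R -> R) (t : R) (k : nat) : R := f t (x_ (clamp J k)).

Lemma mesh_gt0 : Xmin < Xmax -> 0 < h.
Proof. by move=> lt_X; rewrite /mesh divr_gt0 ?subr_gt0 ?ltr0n. Qed.

Lemma grid_succ k : x_ k.+1 - x_ k = h.
Proof. by rewrite /grid -natr1; ring. Qed.

Lemma grid_in_domain k : Xmin < Xmax -> (0 < k <= J)%N -> Xmin < x_ k < Xmax.
Proof.
move=> lt_X /andP[k_gt0 le_kJ]; have h_gt0 := mesh_gt0 lt_X.
have span : J.+1%:R * h = Xmax - Xmin by rewrite /mesh mulrC divfK ?pnatr_eq0.
have k_ge1 : 1 <= k%:R :> R by rewrite ler1n.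
have k_leJ : k%:R <= J%:R :> R by rewrite ler_nat.
rewrite -natr1 in span; rewrite /grid; apply/andP; split; nra.
Qed.

Lemma grid_clamp_in_domain k : Xmin < Xmax -> (0 < J)%N -> Xmin < x_ (clamp J k) < Xmax.
Proof. by move=> lt_X J_gt0; apply: grid_in_domain => //; rewrite /clamp; lia. Qed.

Lemma grid_clamp_step k : Xmin < Xmax -> `|x_ (clamp J k.+1) - x_ (clamp J k)| <= h.
Proof.
move=> lt_X; have [->|->] : clamp J k.+1 = clamp J k \/ clamp J k.+1 = (clamp J k).+1.
- by rewrite /clamp; lia.
- by rewrite subrr normr0 ltW ?mesh_gt0.
- by rewrite grid_succ gtr0_norm ?mesh_gt0.
Qed.

Lemma ext_out (e : 'cV[R]_J) k : (J < k)%N -> ext e k = 0.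
Proof. by case: k => [|k] //= lt_Jk; rewrite insubF //; lia. Qed.

Lemma ext_ord (e : 'cV[R]_J) (i : 'I_J) : ext e i.+1 = e i 0.
Proof. by rewrite /= valK. Qed.

Lemma norm2sq_ext (e : 'cV[R]_J) : norm2sq e = \sum_(1 <= k < J.+1) ext e k ^+ 2.
Proof. by rewrite big_add1 big_mkord; apply: eq_bigr => i _; rewrite ext_ord. Qed.

Lemma inner_fdmat (a b r : R -> R -> R) (t : R) (e : 'cV[R]_J) :
  inner e (fdmat a b r Xmin Xmax t J *m e) =
  \sum_(1 <= k < J.+1) ext e k * fd_apply h (nodal a t) (nodal b t) (nodal r t) (ext e) k.
Proof.
rewrite /inner big_add1 big_mkord; apply: eq_bigr => i _; rewrite ext_ord; congr (_ * _).
have clamp_i : clamp J i.+1 = i.+1 by rewrite /clamp; have := ltn_ord i; lia.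
rewrite mxE /fd_apply /nodal clamp_i -(sum_tridiag _ _ _ (ltn_ord i) (erefl : ext e 0 = 0) (ext_out e (ltnSn J))).
by rewrite big_mkord; apply: eq_bigr => j _; rewrite !mxE ext_ord.
Qed.

End FiniteDifferenceMatrix.

Lemma Ndisc_div_sqr (R : realType) (J : nat) (f : nat -> R) (h : R) :
  Ndisc J (fun k => f k / h) ^+ 2 = \sum_(1 <= k < J.+2) bdiff h f k ^+ 2.
Proof.
rewrite /Ndisc sqr_sqrtr; last by apply: sumr_ge0 => k _; rewrite sqr_ge0.
by apply: eq_bigr => k _; rewrite real_normK ?num_real // /bdiff mulrBl.
Qed.

Theorem lemma4p6 (R : realType) (eta0 L Bb Br : R) :
  0 < eta0 -> 0 <= L -> 0 <= Bb -> 0 <= Br ->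
  exists eta : R, exists gamma : R, 0 < eta /\ 0 <= gamma /\
  forall (Xmin Xmax T : R) (a b r : R -> R -> R),
    Xmin < Xmax -> 0 < T ->
    (exists Ba : R, forall t x, 0 < t < T -> Xmin < x < Xmax -> `|a t x| <= Ba) ->
    (forall t x, 0 < t < T -> Xmin < x < Xmax -> eta0 <= a t x) ->
    (forall t x y, 0 < t < T -> Xmin < x < Xmax -> Xmin < y < Xmax ->
       `|a t x - a t y| <= L * `|x - y|) ->
    (forall t x, 0 < t < T -> Xmin < x < Xmax -> `|b t x| <= Bb) ->
    (forall t x, 0 < t < T -> Xmin < x < Xmax -> `|r t x| <= Br) ->
    forall (J : nat) (t : R), (0 < J)%N -> 0 < t < T ->
    forall e : 'cV[R]_J,
      inner e (fdmat a b r Xmin Xmax t J *m e)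
      >= eta * Ndisc J (fun k => ext e k / mesh Xmin Xmax J) ^+ 2
         - gamma * norm2sq e.
Proof.
move=> eta0_gt0 L_ge0 Bb_ge0 Br_ge0.
exists (eta0 / 4), ((L + Bb) ^+ 2 / eta0 + Br); split; first lra.
split; first by rewrite addr_ge0 // divr_ge0 ?sqr_ge0 // ltW.
move=> Xmin Xmax T a b r lt_X _ _ a_ge a_lip b_le r_le J t J_gt0 t_in e.
have node_in k := grid_clamp_in_domain k lt_X J_gt0.
rewrite inner_fdmat Ndisc_div_sqr norm2sq_ext.
apply: fd_energy_lower_bound => // [||k|k|k|k].
- exact: ext_out.
- exact: mesh_gt0.
- exact: a_ge t_in (node_in k).
- apply: le_trans (a_lip _ _ _ t_in (node_in k.+1) (node_in k)) _.
  by rewrite ler_wpM2l // grid_clamp_step.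
- exact: b_le t_in (node_in k).
- exact: r_le t_in (node_in k).
Qed.
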